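(* Let $n,m,\ell$ be positive integers. If $f:\mathcal{D}(n)\to\mathcal{D}(m)$ and $g:\mathcal{D}(m)\to\mathcal{D}(\ell)$ are reducing, then so is $g\circ f:\mathcal{D}(n)\to\mathcal{D}(\ell)$.
   Context: For a positive integer $n$, $\mathcal{D}(n)$ is the set of positive divisors of $n$, and $\lambda(n)$ is the least prime factor of $n$ if $n\ge2$, with $\lambda(1)=1$. For positive integers $m,n$, a function $f:\mathcal{D}(n)\to\mathcal{D}(m)$ is called reducing if for all $d,d'\in\mathcal{D}(n)$: (a) $f(d)\le d$; (b) $\frac{m/f(d)}{n/d}\le\min\{1,\ \lambda(m/f(d))/\lambda(n/d)\}$; (c) if $f(d)=2^if(d')$ for some $i\in\mathbb{Z}$, then $d=2^jd'$ for some $j\in\mathbb{Z}$. *)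

From mathcomp Require Import all_boot all_order all_algebra.
Set Implicit Arguments. Unset Strict Implicit. Unset Printing Implicit Defensive.
Import Order.TTheory GRing.Theory Num.Theory.

(* lambda(n): least prime factor of n >= 2, lambda(1) = 1.  MathComp's [pdiv]
   is exactly this for n >= 1 (pdiv 1 = 1). *)
Definition lpf (n : nat) : nat := pdiv n.

(* Divisor sets D(n): {d | d %| n}, n > 0.  A function D(n) -> D(m) is
   represented by f : nat -> nat that maps divisors of n to divisors of m
   (values outside D(n) are irrelevant). *)
Definition maps_divisors (n m : nat) (f : nat -> nat) : Prop :=
  forall d, d %| n -> f d %| m.

Definition reducing (n m : nat) (f : nat -> nat) : Prop :=
  maps_divisors n m f /\
  forall d d', d %| n -> d' %| n ->
    [/\ (f d <= d)%N,
        (((m %/ f d)%:R / (n %/ d)%:R : rat)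
           <= Num.min 1 ((lpf (m %/ f d))%:R / (lpf (n %/ d))%:R))%R
      & (exists i : int, (f d)%:R = ((2%:R : rat) ^ i) * (f d')%:R)%R ->
        (exists j : int, d%:R = ((2%:R : rat) ^ j) * d'%:R)%R].

From mathcomp Require Import all_boot all_order all_algebra.
Set Implicit Arguments. Unset Strict Implicit. Unset Printing Implicit Defensive.
Import Order.TTheory GRing.Theory Num.Theory.

(* For (b), the quotient
   (l/g(f d))/(n/d) telescopes as (l/g(f d))/(m/f d) * (m/f d)/(n/d), and
   likewise for the ratio of least prime factors, so the bound follows because
   [x <= min 1 u] is stable under products of nonnegative numbers. *)

Local Open Scope ring_scope.

Lemma mul_le_min1 (R : realDomainType) (x y u v : R) :
  0 <= x -> 0 <= y -> x <= Num.min 1 u -> y <= Num.min 1 v ->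
  x * y <= Num.min 1 (u * v).
Proof.
move=> x_ge0 y_ge0; rewrite !le_min => /andP[x_le1 x_le_u] /andP[y_le1 y_le_v].
by rewrite ler_pM // andbT -(mulr1 1) ler_pM.
Qed.

Lemma natr_div_trans (R : numFieldType) (a b c : nat) : (0 < b)%N ->
  c%:R / a%:R = c%:R / b%:R * (b%:R / a%:R) :> R.
Proof. by move=> b_gt0; rewrite mulrA divfK // pnatr_eq0 -lt0n. Qed.

Definition lpf_ratio_bound (a b : nat) : Prop :=
  (a%:R / b%:R : rat) <= Num.min 1 ((lpf a)%:R / (lpf b)%:R).

Lemma lpf_ratio_bound_trans (a b c : nat) : (0 < b)%N ->
  lpf_ratio_bound b a -> lpf_ratio_bound c b -> lpf_ratio_bound c a.
Proof.
move=> b_gt0 ba cb; rewrite /lpf_ratio_bound (natr_div_trans _ a c b_gt0).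
rewrite (natr_div_trans _ (lpf a) (lpf c) (pdiv_gt0 b)).
by apply: mul_le_min1; rewrite ?divr_ge0.
Qed.

Theorem lemma3p7 (n m l : nat) (f g : nat -> nat) :
  (0 < n)%N -> (0 < m)%N -> (0 < l)%N ->
  reducing n m f -> reducing m l g -> reducing n l (fun d => g (f d)).
Proof.
move=> n_gt0 m_gt0 l_gt0 [f_div f_red] [g_div g_red]; split=> [d d_n|d d' d_n d'_n].
  exact/g_div/f_div.
have [fd_le f_bound f_2adic] := f_red _ _ d_n d'_n.
have [gfd_le g_bound g_2adic] := g_red _ _ (f_div _ d_n) (f_div _ d'_n).
have quot_gt0 : (0 < m %/ f d)%N.
  have fd_m := f_div _ d_n.
  by rewrite divn_gt0 ?(dvdn_gt0 m_gt0 fd_m) // dvdn_leq.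
split=> [|| /g_2adic /f_2adic //].
- exact: leq_trans gfd_le fd_le.
- exact: lpf_ratio_bound_trans quot_gt0 f_bound g_bound.
Qed.
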